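(* Let $\bm\delta=(\delta_1,\dots,\delta_4)$ be fixed positive reals and let $R_1,\dots,R_5\subseteq\mathbb{R}^2$ with $|R_i|\le n$ for every $i\in[5]$. If the number of pairs $(r_1,r_2)\in R_1\times R_2$ with $\|r_1-r_2\|=\delta_1$ is $O(n)$, or the number of pairs $(r_4,r_5)\in R_4\times R_5$ with $\|r_4-r_5\|=\delta_4$ is $O(n)$, then $C_4(R_1,\dots,R_5)=O\left(n\cdot u_2(n,n)\right)$.
   Context: For sets $P_1,\dots,P_5\subseteq\mathbb{R}^2$, $C_4(P_1,\dots,P_5)$ is the number of $5$-tuples $(p_1,\dots,p_5)$ with $p_i\in P_i$, $\|p_i-p_{i+1}\|=\delta_i$ for $i\in[4]$, and $p_i\ne p_j$ for $i\ne j$. $u_2(m,n)$ denotes the maximum, over sets $A$ of $m$ points and $B$ of $n$ points in $\mathbb{R}^2$, of the number of pairs $(a,b)\in A\times B$ at a given fixed distance (the maximum number of incidences between $m$ points and $n$ circles of a fixed radius). *)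

From HB Require Import structures.
From mathcomp Require Import all_boot all_order all_algebra.
From mathcomp Require Import boolp classical_sets reals.
Set Implicit Arguments. Unset Strict Implicit. Unset Printing Implicit Defensive.
Import Order.TTheory GRing.Theory Num.Theory.
Local Open Scope ring_scope.
Local Open Scope classical_set_scope.

Definition dist2 (R : realType) (p q : R * R) : R :=
  Num.sqrt ((p.1 - q.1) ^+ 2 + (p.2 - q.2) ^+ 2).

(* Number of pairs (a,b) in A x B with ||a - b|| = d. Finite point sets are
   duplicate-free sequences. *)
Definition pair_count (R : realType) (d : R) (A B : seq (R * R)) : nat :=
  count (fun ab : (R * R) * (R * R) => dist2 ab.1 ab.2 == d)
        [seq (a, b) | a <- A, b <- B].

Definition C4 (R : realType) (d1 d2 d3 d4 : R)
    (P1 P2 P3 P4 P5 : seq (R * R)) : nat :=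
  count (fun t : seq (R * R) =>
           match t with
           | [:: p1; p2; p3; p4; p5] =>
               [&& dist2 p1 p2 == d1, dist2 p2 p3 == d2,
                   dist2 p3 p4 == d3, dist2 p4 p5 == d4 & uniq t]
           | _ => false
           end)
    [seq p1 :: t1 | p1 <- P1, t1 <-
      [seq p2 :: t2 | p2 <- P2, t2 <-
        [seq p3 :: t3 | p3 <- P3, t3 <-
          [seq p4 :: t4 | p4 <- P4, t4 <- [seq [:: p5] | p5 <- P5]]]]].

(* u_2(m,n): maximum number of unit-distance pairs between a set of m points
   and a set of n points in the plane (the fixed distance is normalized to 1;
   by scaling the value is the same for any positive distance). *)
Definition u2 (R : realType) (m n : nat) : R :=
  sup [set x : R | exists A B : seq (R * R),
         [/\ uniq A, uniq B, size A = m, size B = n &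
             x = (pair_count 1 A B)%:R]].

From HB Require Import structures.
From mathcomp Require Import all_boot all_order all_algebra.
From mathcomp Require Import boolp classical_sets reals.
From mathcomp Require Import ring lra.
Set Implicit Arguments. Unset Strict Implicit. Unset Printing Implicit Defensive.
Import Order.TTheory GRing.Theory Num.Theory.
Local Open Scope ring_scope.

(* Fix (p1, p2) with |p1 p2| = d1 and (p4, p5) with |p4 p5| = d4.  Since the five
   points are distinct, p2 <> p4, and p3 lies on the circle of radius d2 around p2
   and on the circle of radius d3 around p4; two circles with distinct centres share
   at most two points.  Hence C4 <= 2 * P(d1; R1, R2) * P(d4; R4, R5), where P counts
   pairs at the given distance.  One factor is at most K n by hypothesis, the other
   at most u2(n, n): rescale the pair to unit distance and pad both sets with fresh
   points up to exactly n points. *)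

Lemma count_sumb (T : Type) (P : pred T) (s : seq T) :
  count P s = (\sum_(x <- s) P x)%N.
Proof. by rewrite -sum1_count big_mkcond; apply: eq_bigr => x _; case: (P x). Qed.

Lemma count_le2_of_no_three (T : eqType) (P : pred T) (s : seq T) :
  (forall x y z, P x -> P y -> P z -> x != y -> x != z -> y != z -> False) ->
  uniq s -> (count P s <= 2)%N.
Proof.
move=> no3 us; rewrite -size_filter.
have : uniq (filter P s) by exact: filter_uniq.
have : all P (filter P s) by exact: filter_all.
case: (filter P s) => [|x [|y [|z t]]] //= /and4P[Px Py Pz _].
rewrite !inE !negb_or => /and3P[/and3P[xy xz _] /andP[yz _] _].
by case: (no3 x y z Px Py Pz xy xz yz).
Qed.

Section PlaneVectors.
Variable R : realFieldType.
Implicit Types u v w a b p q x y z : R * R.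

Definition dotp u v : R := u.1 * v.1 + u.2 * v.2.
Definition crossp u v : R := u.1 * v.2 - u.2 * v.1.
Definition sqdist p q : R := (p.1 - q.1) ^+ 2 + (p.2 - q.2) ^+ 2.

Lemma dotpC u v : dotp u v = dotp v u.
Proof. by rewrite /dotp mulrC [u.2 * _]mulrC. Qed.

Lemma dotpp_eq0 u : (dotp u u == 0) = (u == 0).
Proof.
case: u => u1 u2; rewrite /dotp /= -!expr2 paddr_eq0 ?sqr_ge0 // !sqrf_eq0.
by rewrite xpair_eqE.
Qed.

Lemma lagrange_identity u v :
  dotp u v ^+ 2 + crossp u v ^+ 2 = dotp u u * dotp v v.
Proof. by rewrite /dotp /crossp; ring. Qed.

Lemma dotp_crossp_eq0 u v : dotp u v = 0 -> crossp u v = 0 -> u = 0 \/ v = 0.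
Proof.
move=> duv cuv; have /eqP := lagrange_identity u v.
rewrite duv cuv expr0n addr0 eq_sym mulf_eq0 !dotpp_eq0.
by case/orP => /eqP; [left | right].
Qed.

Lemma crossp_eq0_of_orthogonal w u v :
  w != 0 -> dotp w u = 0 -> dotp w v = 0 -> crossp u v = 0.
Proof.
case: w => w1 w2; rewrite xpair_eqE negb_and /dotp /= => /orP[] nz wu wv.
- apply: (mulfI nz); rewrite mulr0.
  have -> : w1 * crossp u v = v.2 * (w1 * u.1 + w2 * u.2) - u.2 * (w1 * v.1 + w2 * v.2).
    by rewrite /crossp; ring.
  by rewrite wu wv !mulr0 subrr.
- apply: (mulfI nz); rewrite mulr0.
  have -> : w2 * crossp u v = u.1 * (w1 * v.1 + w2 * v.2) - v.1 * (w1 * u.1 + w2 * u.2).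
    by rewrite /crossp; ring.
  by rewrite wu wv !mulr0 subrr.
Qed.

Lemma no_three_common_points_of_circles a b (r s : R) x y z :
  a != b -> x != y -> x != z -> y != z ->
  sqdist a x = r -> sqdist a y = r -> sqdist a z = r ->
  sqdist x b = s -> sqdist y b = s -> sqdist z b = s -> False.
Proof.
(* All common points lie on a line orthogonal to u = b - a, whereas the chords
   xy and xz of the first circle have their midpoints on the line through a
   parallel to u; so y - z is both orthogonal and parallel to u. *)
move=> ab xy xz yz ax ay az xb yb zb.
set u := b - a.
have radical p q : sqdist a p = sqdist a q -> sqdist p b = sqdist q b ->
    dotp (p - q) u = 0.
  by rewrite /sqdist /dotp /u /=; lra.
have chord p q : sqdist a p = sqdist a q -> dotp (p - q) (p + q - a *+ 2) = 0.
  by rewrite /sqdist /dotp /=; lra.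
have parallel p q : p != q -> sqdist a p = sqdist a q -> sqdist p b = sqdist q b ->
    crossp u (p + q - a *+ 2) = 0.
  move=> pq hpa hpb; apply: (crossp_eq0_of_orthogonal (w := p - q)).
  - by rewrite subr_eq0.
  - exact: radical.
  - exact: chord.
have cxy := parallel x y xy (etrans ax (esym ay)) (etrans xb (esym yb)).
have cxz := parallel x z xz (etrans ax (esym az)) (etrans xb (esym zb)).
have cyz : crossp u (y - z) = 0 by move: cxy cxz; rewrite /crossp /=; lra.
have dyz : dotp u (y - z) = 0 by rewrite dotpC radical ?ay ?az ?yb ?zb.
case: (dotp_crossp_eq0 dyz cyz) => /eqP; rewrite subr_eq0.
- by rewrite eq_sym (negPf ab).
- by rewrite (negPf yz).
Qed.

End PlaneVectors.

Section Counting.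
Variable R : realType.
Implicit Types (a b p q : R * R) (A B : seq (R * R)).

Lemma sqdist_of_dist2 p q (d : R) : dist2 p q = d -> sqdist p q = d ^+ 2.
Proof. by move=> <-; rewrite sqr_sqrtr // addr_ge0 ?sqr_ge0. Qed.

Lemma count_common_neighbours_le2 a b (da db : R) s : a != b -> uniq s ->
  (count (fun p => (dist2 a p == da) && (dist2 p b == db)) s <= 2)%N.
Proof.
move=> ab; apply: count_le2_of_no_three => x y z.
move=> /andP[/eqP/sqdist_of_dist2 ax /eqP/sqdist_of_dist2 xb].
move=> /andP[/eqP/sqdist_of_dist2 ay /eqP/sqdist_of_dist2 yb].
move=> /andP[/eqP/sqdist_of_dist2 az /eqP/sqdist_of_dist2 zb].
move=> xy xz yz.
exact: (no_three_common_points_of_circles ab xy xz yz ax ay az xb yb zb).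
Qed.

Lemma pair_countE (d : R) A B :
  pair_count d A B = (\sum_(a <- A) \sum_(b <- B) (dist2 a b == d))%N.
Proof. by rewrite /pair_count count_sumb big_allpairs. Qed.

Lemma C4E (d1 d2 d3 d4 : R) P1 P2 P3 P4 P5 :
  C4 d1 d2 d3 d4 P1 P2 P3 P4 P5 =
  (\sum_(p1 <- P1) \sum_(p2 <- P2) \sum_(p3 <- P3) \sum_(p4 <- P4) \sum_(p5 <- P5)
     [&& dist2 p1 p2 == d1, dist2 p2 p3 == d2, dist2 p3 p4 == d3,
         dist2 p4 p5 == d4 & uniq [:: p1; p2; p3; p4; p5]])%N.
Proof.
rewrite /C4 count_sumb big_allpairs_dep; apply: eq_bigr => p1 _.
rewrite big_allpairs_dep; apply: eq_bigr => p2 _.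
rewrite big_allpairs_dep; apply: eq_bigr => p3 _.
rewrite big_allpairs_dep; apply: eq_bigr => p4 _.
by rewrite big_map.
Qed.

Lemma C4_summand_le (d1 d2 d3 d4 : R) p1 p2 p3 p4 p5 :
  ([&& dist2 p1 p2 == d1, dist2 p2 p3 == d2, dist2 p3 p4 == d3,
       dist2 p4 p5 == d4 & uniq [:: p1; p2; p3; p4; p5]]
   <= (dist2 p1 p2 == d1) * (dist2 p4 p5 == d4) *
      [&& p2 != p4, dist2 p2 p3 == d2 & dist2 p3 p4 == d3])%N.
Proof.
case: (dist2 p1 p2 == d1); case: (dist2 p2 p3 == d2);
  case: (dist2 p3 p4 == d3); case: (dist2 p4 p5 == d4); rewrite ?andbF //=.
by have [->|_] := eqVneq p2 p4; rewrite ?inE ?eqxx ?orbT ?andbF ?leq_b1.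
Qed.

Lemma middle_count_le2 (d2 d3 : R) P3 p2 p4 : uniq P3 ->
  (\sum_(p3 <- P3) [&& p2 != p4, dist2 p2 p3 == d2 & dist2 p3 p4 == d3] <= 2)%N.
Proof.
move=> uP3; rewrite -count_sumb; have [->|p24] := eqVneq p2 p4.
  by rewrite (@eq_count _ _ pred0) ?count_pred0 // => p3 /=; rewrite eqxx.
exact: count_common_neighbours_le2.
Qed.

Lemma C4_le_pair_counts (d1 d2 d3 d4 : R) P1 P2 P3 P4 P5 : uniq P3 ->
  (C4 d1 d2 d3 d4 P1 P2 P3 P4 P5
   <= 2 * (pair_count d1 P1 P2 * pair_count d4 P4 P5))%N.
Proof.
move=> uP3; rewrite C4E.
apply: (@leq_trans (\sum_(p1 <- P1) \sum_(p2 <- P2) \sum_(p4 <- P4) \sum_(p5 <- P5)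
                      (dist2 p1 p2 == d1) * (dist2 p4 p5 == d4) * 2)%N).
  apply: leq_sum => p1 _; apply: leq_sum => p2 _.
  rewrite exchange_big /=; under eq_bigr do rewrite exchange_big /=.
  apply: leq_sum => p4 _; apply: leq_sum => p5 _.
  apply: (@leq_trans (\sum_(p3 <- P3) (dist2 p1 p2 == d1) * (dist2 p4 p5 == d4) *
                        [&& p2 != p4, dist2 p2 p3 == d2 & dist2 p3 p4 == d3])%N).
    by apply: leq_sum => p3 _; apply: C4_summand_le.
  by rewrite -big_distrr leq_mul2l middle_count_le2 ?orbT.
apply: eq_leq; rewrite !pair_countE mulnC -mulnA big_distrl; apply: eq_bigr => p1 _.
rewrite big_distrl; apply: eq_bigr => p2 _.
rewrite big_distrl big_distrr; apply: eq_bigr => p4 _.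
rewrite big_distrl big_distrr; apply: eq_bigr => p5 _.
by rewrite /= mulnA.
Qed.

End Counting.

Lemma exists_notin (T : eqType) (f : nat -> T) (finj : injective f) (s : seq T) :
  exists x, x \notin s.
Proof.
set t := [seq f i | i <- iota 0 (size s).+1].
have /allPn[x _ xs] : ~~ all (mem s) t.
  apply: contraTN (ltnSn (size s)) => /allP ts; rewrite -leqNgt.
  have <- : size t = (size s).+1 by rewrite size_map size_iota.
  by rewrite uniq_leq_size // map_inj_uniq ?iota_uniq.
by exists x.
Qed.

Lemma extend_uniq (T : eqType) (f : nat -> T) (finj : injective f) k (s : seq T) :
  uniq s -> exists t, uniq (s ++ t) /\ size t = k.
Proof.
elim: k s => [|k IHk] s us; first by exists [::]; rewrite cats0.
have [x xs] := exists_notin finj s.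
have uxs : uniq (rcons s x) by rewrite rcons_uniq xs.
have [t [ut st]] := IHk (rcons s x) uxs.
by exists (x :: t); rewrite -cat_rcons /= st.
Qed.

Section UnitDistances.
Variable R : realType.
Implicit Types (p q : R * R) (A B : seq (R * R)).

Definition scalep (k : R) p := (k * p.1, k * p.2).

Lemma scalep_inj (k : R) : k != 0 -> injective (scalep k).
Proof. by move=> k0 [p1 p2] [q1 q2] [/(mulfI k0) -> /(mulfI k0) ->]. Qed.

Lemma dist2_scalep (k : R) p q : 0 <= k ->
  dist2 (scalep k p) (scalep k q) = k * dist2 p q.
Proof.
move=> k0; rewrite /dist2 /= -!mulrBr !exprMn -mulrDr sqrtrM ?sqr_ge0 //.
by rewrite sqrtr_sqr ger0_norm.
Qed.

Lemma pair_count_scalep (k d : R) A B : 0 < k ->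
  pair_count (k * d) (map (scalep k) A) (map (scalep k) B) = pair_count d A B.
Proof.
move=> k0; rewrite !pair_countE big_map; apply: eq_bigr => a _.
rewrite big_map; apply: eq_bigr => b _.
by rewrite dist2_scalep ?ltW // (inj_eq (mulfI (lt0r_neq0 k0))).
Qed.

Lemma pair_count_cat (d : R) A B A' B' :
  (pair_count d A B <= pair_count d (A ++ A') (B ++ B'))%N.
Proof.
rewrite !pair_countE big_cat /=; apply: leq_trans (leq_addr _ _).
by apply: leq_sum => a _; rewrite big_cat leq_addr.
Qed.

Lemma pair_count_le_size (d : R) A B : (pair_count d A B <= size A * size B)%N.
Proof. by rewrite /pair_count -(size_allpairs pair) count_size. Qed.

Lemma pair_count1_le_u2 n A B : uniq A -> uniq B -> size A = n -> size B = n ->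
  (pair_count 1 A B)%:R <= u2 R n n.
Proof.
move=> uA uB sA sB; apply: sup_upper_bound; last by exists A, B.
split; first by exists (pair_count 1 A B)%:R, A, B.
exists (n * n)%:R => _ [A' [B' [_ _ sA' sB' ->]]].
by rewrite ler_nat -{1}sA' -sB' pair_count_le_size.
Qed.

Lemma pair_count_le_u2 (d : R) n A B : 0 < d -> uniq A -> uniq B ->
  (size A <= n)%N -> (size B <= n)%N -> (pair_count d A B)%:R <= u2 R n n.
Proof.
move=> d0 uA uB sA sB; set k := d^-1.
have k0 : 0 < k by rewrite invr_gt0.
have finj : injective (fun i : nat => (i%:R, 0) : R * R).
  by move=> i j [/eqP]; rewrite eqr_nat => /eqP.
have kinj := scalep_inj (lt0r_neq0 k0).
have ukA : uniq (map (scalep k) A) by rewrite map_inj_uniq.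
have ukB : uniq (map (scalep k) B) by rewrite map_inj_uniq.
have [A' [uA' sA']] := extend_uniq finj (n - size A) ukA.
have [B' [uB' sB']] := extend_uniq finj (n - size B) ukB.
rewrite -(pair_count_scalep d A B k0) mulVf ?lt0r_neq0 //.
apply: le_trans (pair_count1_le_u2 uA' uB' _ _); first by rewrite ler_nat pair_count_cat.
- by rewrite size_cat size_map sA' subnKC.
- by rewrite size_cat size_map sB' subnKC.
Qed.

End UnitDistances.

Lemma ler_pM_or (R : numDomainType) (a b k u : R) : 0 <= a -> 0 <= b ->
  a <= u -> b <= u -> a <= k \/ b <= k -> a * b <= k * u.
Proof.
move=> a0 b0 au bu [ak|bk]; first exact: ler_pM.
by rewrite mulrC ler_pM.
Qed.

Theorem lemma3p5 (R : realType) (d1 d2 d3 d4 : R)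
  (hd1 : 0 < d1) (hd2 : 0 < d2) (hd3 : 0 < d3) (hd4 : 0 < d4) (K : R) :
  exists C : R, forall (n : nat) (R1 R2 R3 R4 R5 : seq (R * R)),
    uniq R1 -> uniq R2 -> uniq R3 -> uniq R4 -> uniq R5 ->
    (size R1 <= n)%N -> (size R2 <= n)%N -> (size R3 <= n)%N ->
    (size R4 <= n)%N -> (size R5 <= n)%N ->
    ((pair_count d1 R1 R2)%:R <= K * n%:R \/
     (pair_count d4 R4 R5)%:R <= K * n%:R) ->
    (C4 d1 d2 d3 d4 R1 R2 R3 R4 R5)%:R <= C * n%:R * u2 R n n.
Proof.
exists (2 * K) => n R1 R2 R3 R4 R5 uR1 uR2 uR3 uR4 uR5 sR1 sR2 _ sR4 sR5 sparse.
have hC4 := C4_le_pair_counts d1 d2 d3 d4 R1 R2 R4 R5 uR3.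
rewrite -(ler_nat R) !natrM in hC4.
apply: (le_trans hC4); rewrite -!mulrA ler_pM2l // mulrA.
apply: ler_pM_or => //; exact: pair_count_le_u2.
Qed.
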